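(* With $\tilde D$, $E_i$ and $D$ as below, every finite string $E_{j_1}E_{j_2}\cdots E_{j_n}$ of frame vectors (indices arbitrary, repetitions and any order allowed) is product-rule-separable: $$D_{E_i}(E_{j_1}\cdots E_{j_n})=\sum_{r=1}^nE_{j_1}\cdots E_{j_{r-1}}(D_{E_i}E_{j_r})E_{j_{r+1}}\cdots E_{j_n}.$$ Consequently $D_a(AB)=(D_aA)B+A(D_aB)$ for all tangent vectors $a$ and smooth multivector fields $A,B$.
   Context: $M$ is a smooth manifold with a smooth nondegenerate symmetric metric of arbitrary signature, written $a\cdot b$; $\partial_a\varphi=a(\varphi)$. An affine connection $\tilde D$ is linear in the direction, additive in the field, with $\tilde D_a(\lambda v)=(\partial_a\lambda)v+\lambda\tilde D_av$; metric-compatible means $\partial_c(a\cdot b)=(\tilde D_ca)\cdot b+a\cdot\tilde D_cb$. $GT_pM$ is the geometric (Clifford) algebra of $T_pM$ with $aa=a\cdot a$. A frame $E_i$ is orthonormal if $E_i\cdot E_j=\pm\delta_{ij}$; its canonical multivector basis consists of $E_J=E_{j_1}E_{j_2}\cdots E_{j_r}$ for strictly increasing $j_1<\dots<j_r$, with $E_\emptyset=1$, and every smooth multivector field is uniquely $A=\sum_JA^JE_J$ with smooth $A^J$. Given a metric-compatible $\tilde D$ and a smooth local orthonormal frame $E_i$, the operator $D$ is defined by: (i) $D_{\alpha a+\beta b}A=\alpha D_aA+\beta D_bA$; (ii) $D_{E_i}1=0$; (iii) $D_{E_i}E_j=\tilde D_{E_i}E_j$; (iv) $D_a(\sum_JA^JE_J)=\sum_J((\partial_aA^J)E_J+A^JD_aE_J)$;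 (v) for basis elements of grade at least 2, recursively $D_a(E_iE_K)=(D_aE_i)E_K+E_i(D_aE_K)$ whenever $i<k$ for all $k\in K$. *)

From HB Require Import structures.
From mathcomp Require Import all_boot all_order all_algebra.
Set Implicit Arguments. Unset Strict Implicit. Unset Printing Implicit Defensive.
Import GRing.Theory.
Local Open Scope ring_scope.

Section GA.
(* F : the commutative ring of smooth real functions on the frame domain U;
   n : dimension; s i = E_i . E_i = +-1 (signature of the orthonormal frame). *)
Variables (F : comNzRingType) (n : nat) (s : 'I_n -> F).

(* multivector fields: coefficients A^J on the canonical basis E_J, J a set
   of frame indices (i.e. a strictly increasing index string). *)
Local Notation mv := {ffun {set 'I_n} -> F}.
Local Notation vf := {ffun 'I_n -> F}.

Definition fscale (T : finType) (k : F) (f : {ffun T -> F}) : {ffun T -> F} :=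
  [ffun x => k * f x].

(* E_A E_B = bsign A B * E_(A symdiff B) : Clifford product of basis blades
   for an orthogonal frame with E_i E_i = s i. *)
Definition bsign (A B : {set 'I_n}) : F :=
  (-1) ^+ #|[set p : 'I_n * 'I_n | [&& p.1 \in A, p.2 \in B & (p.2 < p.1)%N]]|
  * \prod_(i in A :&: B) s i.

Definition symd (A B : {set 'I_n}) := (A :\: B) :|: (B :\: A).

Definition mvmul (X Y : mv) : mv :=
  [ffun K => \sum_(A : {set 'I_n}) \sum_(B : {set 'I_n})
     if symd A B == K then bsign A B * X A * Y B else 0].

Definition blade (J : {set 'I_n}) : mv := [ffun K => (K == J)%:R].
Definition mv1 : mv := blade set0.
Definition fE (j : 'I_n) : mv := blade [set j].
Definition vec (v : vf) : mv := \sum_i fscale (v i) (fE i).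
Definition evf (i : 'I_n) : vf := [ffun k => (k == i)%:R].

Definition dot (a b : vf) : F := \sum_i s i * a i * b i.

(* d i = the derivation partial_{E_i} on functions; pd d a = partial_a *)
Definition pd (d : 'I_n -> F -> F) (a : vf) (x : F) : F := \sum_i a i * d i x.

Definition is_frame_derivation (d : 'I_n -> F -> F) :=
  forall i, (forall x y, d i (x + y) = d i x + d i y) /\
            (forall x y, d i (x * y) = d i x * y + x * d i y).

Definition metric_connection (d : 'I_n -> F -> F) (tD : vf -> vf -> vf) :=
  [/\ forall (al be : F) (a b v : vf),
        tD (fscale al a + fscale be b) v = fscale al (tD a v) + fscale be (tD b v),
      forall (a v w : vf), tD a (v + w) = tD a v + tD a w,
      forall (a v : vf) (la : F), tD a (fscale la v) = fscale (pd d a la) v + fscale la (tD a v)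
    & forall (c a b : vf), pd d c (dot a b) = dot (tD c a) b + dot a (tD c b)].

(* D satisfies the defining rules (i)-(v) of the paper *)
Definition defines_D (d : 'I_n -> F -> F) (tD : vf -> vf -> vf) (D : vf -> mv -> mv) :=
  [/\ forall (al be : F) (a b : vf) (A : mv),
        D (fscale al a + fscale be b) A = fscale al (D a A) + fscale be (D b A),
      forall i, D (evf i) mv1 = 0,
      forall i j, D (evf i) (fE j) = vec (tD (evf i) (evf j)),
      forall (a : vf) (A : mv),
        D a A = \sum_(J : {set 'I_n}) (fscale (pd d a (A J)) (blade J) + fscale (A J) (D a (blade J)))
    & forall (a : vf) (j : 'I_n) (K : {set 'I_n}),
        K != set0 -> (forall k, k \in K -> (j < k)%N) ->
        D a (mvmul (fE j) (blade K)) = mvmul (D a (fE j)) (blade K) + mvmul (fE j) (D a (blade K))].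

Definition strprod (js : seq 'I_n) : mv := foldr (fun j X => mvmul (fE j) X) mv1 js.

End GA.

(* The basis blades multiply by E_A E_B = bsign A B E_(A symdiff B); since every
   s i squares to 1, bsign is a bicharacter of the group of index sets, so the
   geometric product is associative. Rule (v) gives the product rule for E_j E_K
   only when j precedes every index of K. For other j one moves E_j into place
   by anticommuting it past the smallest index k of K; the defect this produces
   is the anticommutator {D E_j, E_k} + {D E_k, E_j} = 2 (s_k w_jk + s_j w_kj),
   where w_jk are the connection coefficients, and it vanishes because the
   connection is metric. Hence D_{E_i} obeys the product rule against each E_j,
   then against blades (products of the E_j), and by linearity on all fields;
   the expansion of D on a string is this product rule iterated, and the
   statement for an arbitrary direction a follows by linearity in a. *)

From HB Require Import structures.
From mathcomp Require Import all_boot all_order all_algebra.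
From mathcomp Require Import ring.
Import GRing.Theory.
Local Open Scope ring_scope.
Set Implicit Arguments. Unset Strict Implicit.

Section Fscale.
Variables (F : comNzRingType) (T : finType).
Implicit Types (f g : {ffun T -> F}) (a b c : F).

Lemma fscaleE c f x : fscale c f x = c * f x.
Proof. by rewrite ffunE. Qed.
Lemma fscale1 f : fscale 1 f = f.
Proof. by apply/ffunP=> x; rewrite fscaleE mul1r. Qed.
Lemma fscale0 f : fscale 0 f = 0.
Proof. by apply/ffunP=> x; rewrite fscaleE mul0r ffunE. Qed.
Lemma fscaler0 c : fscale c (0 : {ffun T -> F}) = 0.
Proof. by apply/ffunP=> x; rewrite fscaleE !ffunE mulr0. Qed.
Lemma fscaleDl a b f : fscale (a + b) f = fscale a f + fscale b f.
Proof. by apply/ffunP=> x; rewrite !ffunE mulrDl. Qed.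
Lemma fscaleDr c f g : fscale c (f + g) = fscale c f + fscale c g.
Proof. by apply/ffunP=> x; rewrite !ffunE mulrDr. Qed.
Lemma fscaleA a b f : fscale a (fscale b f) = fscale (a * b) f.
Proof. by apply/ffunP=> x; rewrite !fscaleE mulrA. Qed.
Lemma fscale_sumr (I : Type) (r : seq I) (P : pred I) (G : I -> {ffun T -> F}) c :
  fscale c (\sum_(i <- r | P i) G i) = \sum_(i <- r | P i) fscale c (G i).
Proof. by apply: (big_morph (fscale c)) => [f g|]; [exact: fscaleDr|exact: fscaler0]. Qed.

End Fscale.

Section Clifford.
Variables (F : comNzRingType) (n : nat) (s : 'I_n -> F).
Hypothesis s_sqr : forall i, s i * s i = 1.

Local Notation mv := {ffun {set 'I_n} -> F}.
Local Notation M := (mvmul s).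
Local Notation E := (fE F).
Local Notation bl := (blade F).
Local Notation one := (mv1 F n).
Implicit Types (A B C K : {set 'I_n}) (j k : 'I_n) (X Y Z : mv).

Lemma in_symd (x : 'I_n) A B : (x \in symd A B) = (x \in A) (+) (x \in B).
Proof. by rewrite !inE; case: (x \in A); case: (x \in B). Qed.

Lemma symdK A B : symd A (symd A B) = B.
Proof. by apply/setP=> x; rewrite !in_symd; case: (x \in A); case: (x \in B). Qed.
Lemma symdC A B : symd A B = symd B A.
Proof. by apply/setP=> x; rewrite !in_symd; case: (x \in A); case: (x \in B). Qed.
Lemma symdA A B C : symd A (symd B C) = symd (symd A B) C.
Proof.
by apply/setP=> x; rewrite !in_symd; case: (x \in A); case: (x \in B); case: (x \in C).
Qed.
Lemma symd0 A : symd A set0 = A.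
Proof. by apply/setP=> x; rewrite !in_symd inE; case: (x \in A). Qed.
Lemma symdd A : symd A A = set0.
Proof. by apply/setP=> x; rewrite !in_symd inE; case: (x \in A). Qed.
Lemma symd_eq0 A B : (symd A B == set0) = (A == B).
Proof. by apply/eqP/eqP => [h|->]; [rewrite -(symdK A B) h symd0|exact: symdd]. Qed.

Definition pair_sign (a b : 'I_n) : F :=
  if (b < a)%N then -1 else if a == b then s a else 1.

Lemma bsign_prod A B : bsign s A B = \prod_(a in A) \prod_(b in B) pair_sign a b.
Proof.
rewrite /bsign; transitivity (\prod_(a in A) \prod_(b in B)
    ((if (b < a)%N then -1 else 1) * (if a == b then s a else 1))); last first.
  apply: eq_bigr => a _; apply: eq_bigr => b _; rewrite /pair_sign.
  case: ltnP => h; case: eqP => e //; rewrite ?mulr1 ?mul1r //.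
  by rewrite e ltnn in h.
under [RHS]eq_bigr do rewrite big_split.
rewrite big_split /=; congr (_ * _).
  rewrite -prodr_const pair_big_dep /= big_mkcond [RHS]big_mkcond /=.
  apply: eq_bigr => [[a b]] _ /=; rewrite inE /=.
  by case: (a \in A); case: (b \in B); case: ltnP.
rewrite [RHS]big_mkcond [LHS]big_mkcond /=; apply: eq_bigr => a _.
rewrite inE; case: (boolP (a \in A)) => aA //=.
rewrite big_mkcond /= (bigD1 a) //= eqxx big1 ?mulr1; first by case: (a \in B).
by move=> b; rewrite eq_sym => /negbTE ->; case: (b \in B).
Qed.

Lemma sqr1M (x y : F) : x * x = 1 -> y * y = 1 -> (x * y) * (x * y) = 1.
Proof. by move=> hx hy; rewrite mulrACA hx hy mulr1. Qed.

Lemma sqr1_prod (I : finType) (P : pred I) (g : I -> F) :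
  (forall i, g i * g i = 1) -> (\prod_(i | P i) g i) * (\prod_(i | P i) g i) = 1.
Proof.
move=> hg; apply: (big_ind (fun x => x * x = 1)); [exact: mulr1|exact: sqr1M|].
by move=> i _; apply: hg.
Qed.

Lemma pair_sign_sqr a b : pair_sign a b * pair_sign a b = 1.
Proof. by rewrite /pair_sign; case: ltnP => _; [rewrite mulrNN mulr1|case: eqP; rewrite ?mulr1]. Qed.

Lemma prod_symd (g : 'I_n -> F) A B : (forall x, g x * g x = 1) ->
  \prod_(x in symd A B) g x = \prod_(x in A) g x * \prod_(x in B) g x.
Proof.
move=> hg; rewrite big_mkcond [\prod_(x in A) _]big_mkcond [\prod_(x in B) _]big_mkcond.
rewrite -big_split /=; apply: eq_bigr => x _; rewrite in_symd.
by case: (x \in A); case: (x \in B); rewrite /= ?mulr1 ?mul1r ?hg.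
Qed.

Lemma bsign_symdr A B C : bsign s A (symd B C) = bsign s A B * bsign s A C.
Proof.
by rewrite !bsign_prod -big_split; apply: eq_bigr => a _; apply: prod_symd; apply: pair_sign_sqr.
Qed.

Lemma bsign_symdl A B C : bsign s (symd A B) C = bsign s A C * bsign s B C.
Proof. by rewrite !bsign_prod; apply: prod_symd => x; apply: sqr1_prod; apply: pair_sign_sqr. Qed.

Lemma bsign0l B : bsign s set0 B = 1.
Proof. by rewrite bsign_prod big_set0. Qed.
Lemma bsign0r A : bsign s A set0 = 1.
Proof. by rewrite bsign_prod big1 // => a _; rewrite big_set0. Qed.
Lemma bsign11 j k : bsign s [set j] [set k] = pair_sign j k.
Proof. by rewrite bsign_prod !big_set1. Qed.
Lemma bsign1_lt j K : (forall k, k \in K -> (j < k)%N) -> bsign s [set j] K = 1.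
Proof.
move=> h; rewrite bsign_prod big_set1 big1 // => k kK; rewrite /pair_sign.
by have := h k kK; case: ltngtP => // jk _; rewrite ifN // neq_ltn jk.
Qed.

Lemma mvmulE X Y K : M X Y K = \sum_A bsign s A (symd A K) * X A * Y (symd A K).
Proof.
rewrite ffunE; apply: eq_bigr => A _.
rewrite (bigD1 (symd A K)) //= symdK eqxx big1 ?addr0 // => B hB.
by rewrite ifN //; apply: contra hB => /eqP <-; rewrite symdK.
Qed.

Lemma mvmulDl X X' Y : M (X + X') Y = M X Y + M X' Y.
Proof.
apply/ffunP=> K; rewrite [RHS]ffunE !mvmulE -big_split; apply: eq_bigr => A _.
by rewrite ffunE mulrDr mulrDl.
Qed.
Lemma mvmulDr X Y Y' : M X (Y + Y') = M X Y + M X Y'.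
Proof.
apply/ffunP=> K; rewrite [RHS]ffunE !mvmulE -big_split; apply: eq_bigr => A _.
by rewrite ffunE mulrDr.
Qed.
Lemma mvmulZl c X Y : M (fscale c X) Y = fscale c (M X Y).
Proof.
apply/ffunP=> K; rewrite [RHS]ffunE !mvmulE mulr_sumr; apply: eq_bigr => A _.
by rewrite ffunE; ring.
Qed.
Lemma mvmulZr c X Y : M X (fscale c Y) = fscale c (M X Y).
Proof.
apply/ffunP=> K; rewrite [RHS]ffunE !mvmulE mulr_sumr; apply: eq_bigr => A _.
by rewrite ffunE; ring.
Qed.
Lemma mvmul0l Y : M 0 Y = 0.
Proof. by apply/ffunP=> K; rewrite [RHS]ffunE mvmulE big1 // => A _; rewrite ffunE mulr0 mul0r. Qed.
Lemma mvmul0r X : M X 0 = 0.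
Proof. by apply/ffunP=> K; rewrite [RHS]ffunE mvmulE big1 // => A _; rewrite ffunE mulr0. Qed.
Lemma mvmulNl X Y : M (- X) Y = - M X Y.
Proof. by apply: (addrI (M X Y)); rewrite -mvmulDl !subrr mvmul0l. Qed.

Lemma mvmul_suml (I : Type) (r : seq I) (P : pred I) (G : I -> mv) Y :
  M (\sum_(i <- r | P i) G i) Y = \sum_(i <- r | P i) M (G i) Y.
Proof. by apply: (big_morph (fun X => M X Y)) => [X X'|]; [exact: mvmulDl|exact: mvmul0l]. Qed.
Lemma mvmul_sumr (I : Type) (r : seq I) (P : pred I) (G : I -> mv) X :
  M X (\sum_(i <- r | P i) G i) = \sum_(i <- r | P i) M X (G i).
Proof. by apply: (big_morph (M X)) => [Y Y'|]; [exact: mvmulDr|exact: mvmul0r]. Qed.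

Lemma mvmulA X Y Z : M (M X Y) Z = M X (M Y Z).
Proof.
apply/ffunP=> K; rewrite !mvmulE.
under eq_bigr => N _ do rewrite mvmulE mulr_sumr mulr_suml.
rewrite exchange_big /=; apply: eq_bigr => A _.
rewrite mvmulE mulr_sumr (reindex_inj (can_inj (symdK A))) /=.
apply: eq_bigr => N _; rewrite !symdK symdA (symdC A N) -symdA.
set C := symd N (symd A K).
have -> : symd A K = symd N C by rewrite /C symdK.
rewrite bsign_symdl bsign_symdr; ring.
Qed.

Lemma mvmul1l Y : M one Y = Y.
Proof.
apply/ffunP=> K; rewrite mvmulE (bigD1 set0) //= big1 ?addr0.
  by rewrite ffunE eqxx /= bsign0l !mul1r symdC symd0.
by move=> A hA; rewrite ffunE (negbTE hA) mulr0 mul0r.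
Qed.
Lemma mvmul1r X : M X one = X.
Proof.
apply/ffunP=> K; rewrite mvmulE (bigD1 K) //= big1 ?addr0.
  by rewrite ffunE symdd eqxx /= bsign0r mul1r mulr1.
by move=> A hA; rewrite ffunE symd_eq0 (negbTE hA) mulr0.
Qed.

Lemma mvmul_blade A B : M (bl A) (bl B) = fscale (bsign s A B) (bl (symd A B)).
Proof.
apply/ffunP=> K; rewrite mvmulE (bigD1 A) //= big1 ?addr0; last first.
  by move=> A' hA; rewrite ffunE (negbTE hA) mulr0 mul0r.
rewrite !ffunE eqxx /= mulr1.
have -> : (symd A K == B) = (K == symd A B) by apply/eqP/eqP => [<-|->]; rewrite symdK.
by case: eqP => [->|_]; rewrite ?symdK ?mulr0.
Qed.

Lemma mv_expand X : X = \sum_J fscale (X J) (bl J).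
Proof.
apply/ffunP=> K; rewrite sum_ffunE (bigD1 K) //= big1 ?addr0.
  by rewrite fscaleE ffunE eqxx mulr1.
by move=> J hJ; rewrite fscaleE ffunE eq_sym (negbTE hJ) mulr0.
Qed.

Lemma mv_blade_ind (P : mv -> Prop) :
  P 0 -> (forall X Y, P X -> P Y -> P (X + Y)) ->
  (forall c X, P X -> P (fscale c X)) -> (forall K, P (bl K)) -> forall X, P X.
Proof.
move=> P0 PD PZ Pbl X; rewrite (mv_expand X).
by apply: big_ind => // J _; apply: PZ.
Qed.

Lemma set_min_ind (P : {set 'I_n} -> Prop) :
  P set0 -> (forall k K, (forall x, x \in K -> (k < x)%N) -> P K -> P (k |: K)) ->
  forall K, P K.
Proof.
move=> P0 Pstep K; have [m] := ubnP #|K|; elim: m K => // m IH K.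
case: (set_0Vmem K) => [->|[k0 k0K]] // cardK.
case: (arg_minnP (fun x : 'I_n => val x) k0K) => k kK0 kmin.
have kK : k \in K := kK0.
rewrite -(setD1K kK); apply: Pstep => [x|].
  by rewrite !inE => /andP [xk xK]; rewrite ltn_neqAle kmin // andbT eq_sym.
by apply: IH; move: cardK; rewrite (cardsD1 k K) kK add1n ltnS.
Qed.

Lemma blade_setU1_lt k K : (forall x, x \in K -> (k < x)%N) ->
  bl (k |: K) = M (E k) (bl K).
Proof.
move=> hk; rewrite /fE mvmul_blade bsign1_lt // fscale1; congr blade.
apply/setP=> x; rewrite in_symd !inE; case: (eqVneq x k) => [->|] //=.
by case: (boolP (k \in K)) => // /hk; rewrite ltnn.
Qed.

Lemma fE_sqr k : M (E k) (E k) = fscale (s k) one.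
Proof. by rewrite /fE mvmul_blade bsign11 symdd /pair_sign ltnn eqxx. Qed.

Lemma fE_anticomm j k : j != k -> M (E j) (E k) = - M (E k) (E j).
Proof.
move=> jk; apply/eqP; rewrite -addr_eq0 /fE !mvmul_blade !bsign11 (symdC [set k]).
rewrite -fscaleDl /pair_sign (ifN_eq _ _ jk) (ifN_eqC _ _ jk).
by case: (ltngtP j k) => [||/val_inj/eqP]; rewrite ?subrr ?addNr ?fscale0 // (negPf jk).
Qed.

Lemma vec_fE_anticomm (a : {ffun 'I_n -> F}) k :
  M (vec a) (E k) + M (E k) (vec a) = fscale (s k * a k + s k * a k) one.
Proof.
rewrite /vec mvmul_suml mvmul_sumr -big_split /= (bigD1 k) //= big1 ?addr0.
  by rewrite mvmulZl mvmulZr fE_sqr !fscaleA -fscaleDl; congr fscale; ring.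
by move=> m hm; rewrite mvmulZl mvmulZr -fscaleDr fE_anticomm // addNr fscaler0.
Qed.

Lemma derivation_strprod (dl : mv -> mv) (j0 : 'I_n) (js : seq 'I_n) :
  (forall X Y, dl (M X Y) = M (dl X) Y + M X (dl Y)) ->
  dl (strprod s js) =
  \sum_(r < size js) M (M (strprod s (take r js)) (dl (E (nth j0 js r)))) (strprod s (drop r.+1 js)).
Proof.
move=> dlM; elim: js => [|j js IH] /=.
  have := dlM one one; rewrite !mvmul1l mvmul1r -{1}(addr0 (dl one)) => /addrI <-.
  by rewrite big_ord0.
rewrite dlM IH big_ord_recl /= mvmul1l drop0 mvmul_sumr; congr (_ + _).
by apply: eq_bigr => r _; rewrite !mvmulA.
Qed.

(* Abstract form of D_{E_i}: [w j] stands for the connection vector D_{E_i} E_j,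
   and [w_skew] is its antisymmetry coming from metric compatibility. *)
Section Derivation.
Variables (dd : F -> F) (dl : mv -> mv) (w : 'I_n -> {ffun 'I_n -> F}).
Hypothesis dlD : forall X Y, dl (X + Y) = dl X + dl Y.
Hypothesis dlZ : forall c X, dl (fscale c X) = fscale (dd c) X + fscale c (dl X).
Hypothesis dd_sign : forall k, dd (s k) = 0.
Hypothesis dl1 : dl one = 0.
Hypothesis dl_fE : forall j, dl (E j) = vec (w j).
Hypothesis w_skew : forall j k, s k * w j k + s j * w k j = 0.
Hypothesis dl_fE_blade : forall j K, K != set0 -> (forall k, k \in K -> (j < k)%N) ->
  dl (M (E j) (bl K)) = M (dl (E j)) (bl K) + M (E j) (dl (bl K)).

Definition leibniz X Y := dl (M X Y) = M (dl X) Y + M X (dl Y).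

Lemma dl0 : dl 0 = 0.
Proof. by apply: (addrI (dl 0)); rewrite -dlD !addr0. Qed.
Lemma dlN X : dl (- X) = - dl X.
Proof. by apply: (addrI (dl X)); rewrite -dlD !subrr dl0. Qed.

Lemma leibnizDr X Y Y' : leibniz X Y -> leibniz X Y' -> leibniz X (Y + Y').
Proof. by rewrite /leibniz mvmulDr dlD => -> ->; rewrite dlD !mvmulDr addrACA. Qed.

Lemma leibnizZr c X Y : leibniz X Y -> leibniz X (fscale c Y).
Proof.
by rewrite /leibniz mvmulZr dlZ => ->; rewrite dlZ !mvmulDr !mvmulZr fscaleDr addrCA.
Qed.

Lemma leibnizr_linear X : (forall K, leibniz X (bl K)) -> forall Y, leibniz X Y.
Proof.
move=> hX; apply: mv_blade_ind => [|Y Y'|c Y|//]; [|exact: leibnizDr|exact: leibnizZr].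
by rewrite /leibniz mvmul0r dl0 !mvmul0r addr0.
Qed.

Lemma leibnizl_linear : (forall K Y, leibniz (bl K) Y) -> forall X Y, leibniz X Y.
Proof.
move=> hK; apply: mv_blade_ind => [Y|X X' hX hX' Y|c X hX Y|//]; rewrite /leibniz.
- by rewrite mvmul0l dl0 !mvmul0l addr0.
- by rewrite mvmulDl dlD hX hX' dlD !mvmulDl addrACA.
- by rewrite mvmulZl dlZ hX dlZ mvmulDl !mvmulZl fscaleDr addrA.
Qed.

Lemma leibnizMl X X' : (forall Y, leibniz X Y) -> (forall Y, leibniz X' Y) ->
  forall Y, leibniz (M X X') Y.
Proof.
move=> hX hX' Y; rewrite /leibniz mvmulA hX hX' mvmulDr hX mvmulDl !mvmulA.
by rewrite addrA.
Qed.

Lemma dl_fE_anticomm j k :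
  M (dl (E j)) (E k) + M (E k) (dl (E j)) + (M (dl (E k)) (E j) + M (E j) (dl (E k))) = 0.
Proof.
by rewrite !dl_fE !vec_fE_anticomm -fscaleDl addrACA w_skew addr0 fscale0.
Qed.

Lemma dl_fE_anticomm_diag k : M (dl (E k)) (E k) + M (E k) (dl (E k)) = 0.
Proof. by rewrite dl_fE vec_fE_anticomm w_skew fscale0. Qed.

Lemma leibniz_fE_lt j K : (forall k, k \in K -> (j < k)%N) -> leibniz (E j) (bl K).
Proof.
move=> hK; case: (eqVneq K set0) => [->|K0]; last exact: dl_fE_blade.
by rewrite /leibniz -/one !mvmul1r dl1 mvmul0r addr0.
Qed.

Lemma leibniz_fE_sqr k Y : leibniz (E k) Y -> leibniz (E k) (M (E k) Y).
Proof.
rewrite /leibniz -!mvmulA fE_sqr mvmulZl mvmul1l dlZ dd_sign fscale0 add0r => ->.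
by rewrite mvmulDr -!mvmulA fE_sqr mvmulZl mvmul1l addrA -mvmulDl dl_fE_anticomm_diag mvmul0l add0r.
Qed.

(* Pushing E_k past E_j costs a sign on both sides; what is left over is the
   anticommutator relation [dl_fE_anticomm] multiplied by Y. *)
Lemma leibniz_fE_swap j k Y : j != k ->
  leibniz (E k) (M (E j) Y) -> leibniz (E j) Y -> leibniz (E k) Y ->
  leibniz (E j) (M (E k) Y).
Proof.
rewrite /leibniz => jk hkj hj hk.
rewrite -mvmulA fE_anticomm // mvmulNl mvmulA dlN hkj hj hk.
rewrite !mvmulDr -!mvmulA (fE_anticomm jk) mvmulNl.
have := congr1 (fun Z => M Z Y) (dl_fE_anticomm j k).
rewrite /= mvmul0l !mvmulDl => h; rewrite -[LHS]addr0 -{}h.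
by apply/ffunP => x; rewrite !ffunE; ring.
Qed.

Lemma leibniz_fE_blade K : forall j, leibniz (E j) (bl K).
Proof.
elim/set_min_ind: K => [j|k K hk IH j]; first by apply: leibniz_fE_lt => x; rewrite inE.
case: (ltngtP j k) => [jk|kj|/val_inj ->].
- by apply: leibniz_fE_lt => x; rewrite !inE => /predU1P [->|/hk/(ltn_trans jk)].
- rewrite blade_setU1_lt //; apply: leibniz_fE_swap (IH j) (leibniz_fE_lt hk).
    by rewrite neq_ltn kj orbT.
  rewrite /fE mvmul_blade; apply/leibnizZr/leibniz_fE_lt => x.
  by rewrite in_symd !inE; case: eqP => [-> _|_ /hk].
- by rewrite blade_setU1_lt //; apply/leibniz_fE_sqr/leibniz_fE_lt.
Qed.

Lemma leibniz_blade K Y : leibniz (bl K) Y.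
Proof.
elim/set_min_ind: K Y => [|k K hk IH] Y.
  by rewrite /leibniz -/one !mvmul1l dl1 mvmul0l add0r.
rewrite blade_setU1_lt //; apply: leibnizMl Y => [|//].
exact: leibnizr_linear (leibniz_fE_blade ^~ k).
Qed.

Lemma dl_mvmul X Y : dl (M X Y) = M (dl X) Y + M X (dl Y).
Proof. exact: (leibnizl_linear leibniz_blade). Qed.

End Derivation.
End Clifford.

Section Frame.
Variables (F : comNzRingType) (n : nat) (s : 'I_n -> F) (d : 'I_n -> F -> F).
Variables (tD : {ffun 'I_n -> F} -> {ffun 'I_n -> F} -> {ffun 'I_n -> F})
  (D : {ffun 'I_n -> F} -> {ffun {set 'I_n} -> F} -> {ffun {set 'I_n} -> F}).
Hypothesis s_sign : forall i, s i = 1 \/ s i = -1.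
Hypothesis d_der : is_frame_derivation d.
Hypothesis tD_metric : metric_connection s d tD.
Hypothesis D_def : defines_D s d tD D.

Local Notation vf := {ffun 'I_n -> F}.
Local Notation mv := {ffun {set 'I_n} -> F}.
Local Notation M := (mvmul s).
Local Notation bl := (blade F).
Implicit Types (a : vf) (X Y : mv) (x y c : F).

Lemma s_sqr i : s i * s i = 1.
Proof. by case: (s_sign i) => ->; rewrite ?mulrNN mulr1. Qed.

Lemma pdD a x y : pd d a (x + y) = pd d a x + pd d a y.
Proof. by rewrite /pd -big_split; apply: eq_bigr => i _; case: (d_der i) => -> _; rewrite mulrDr. Qed.

Lemma pdM a x y : pd d a (x * y) = pd d a x * y + x * pd d a y.
Proof.
rewrite /pd mulr_suml mulr_sumr -big_split; apply: eq_bigr => i _.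
by case: (d_der i) => _ ->; rewrite /=; ring.
Qed.

Lemma pd0 a : pd d a 0 = 0.
Proof. by apply: (addrI (pd d a 0)); rewrite -pdD !addr0. Qed.

Lemma pd_sign a i : pd d a (s i) = 0.
Proof.
have pd1 : pd d a 1 = 0.
  have := pdM a 1 1; rewrite !mulr1 mul1r => h.
  by apply: (addrI (pd d a 1)); rewrite -h addr0.
have pdN x : pd d a (- x) = - pd d a x.
  by apply: (addrI (pd d a x)); rewrite -pdD !subrr pd0.
by case: (s_sign i) => ->; rewrite ?pdN pd1 ?oppr0.
Qed.

Lemma dot_evfl a j : dot s (evf F j) a = s j * a j.
Proof.
rewrite /dot (bigD1 j) //= ffunE eqxx mulr1 big1 ?addr0 // => m hm.
by rewrite ffunE (negbTE hm) mulr0 mul0r.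
Qed.

Lemma dot_evfr a k : dot s a (evf F k) = s k * a k.
Proof.
rewrite /dot (bigD1 k) //= ffunE eqxx mulr1 big1 ?addr0 // => m hm.
by rewrite ffunE (negbTE hm) mulr0.
Qed.

(* Metric compatibility applied to the constant products E_j . E_k. *)
Lemma connection_skew a j k : s k * tD a (evf F j) k + s j * tD a (evf F k) j = 0.
Proof.
case: tD_metric => _ _ _ tD_dot.
rewrite -dot_evfr -dot_evfl -tD_dot dot_evfl ffunE.
by case: eqP => _; rewrite ?mulr1 ?mulr0 ?pd_sign ?pd0.
Qed.

Lemma D_expand a X :
  D a X = \sum_J fscale (pd d a (X J)) (bl J) + \sum_J fscale (X J) (D a (bl J)).
Proof. by case: D_def => _ _ _ -> _; rewrite big_split. Qed.

Lemma D_add a X Y : D a (X + Y) = D a X + D a Y.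
Proof.
rewrite !D_expand addrACA -!big_split; apply: eq_bigr => J _.
by rewrite ffunE pdD !fscaleDl.
Qed.

Lemma D_scale a c X : D a (fscale c X) = fscale (pd d a c) X + fscale c (D a X).
Proof.
rewrite !D_expand fscaleDr addrA; congr (_ + _).
  rewrite {2}(mv_expand X) !fscale_sumr -big_split; apply: eq_bigr => J _.
  by rewrite ffunE pdM fscaleDl !fscaleA.
by rewrite fscale_sumr; apply: eq_bigr => J _; rewrite ffunE fscaleA.
Qed.

Lemma D_direction_decomp a X : D a X = \sum_k fscale (a k) (D (evf F k) X).
Proof.
case: D_def => Dlin _ _ _ _.
have D0 : D 0 X = 0 by have := Dlin 0 0 0 0 X; rewrite !fscale0 !addr0.
have ea : a = \sum_k fscale (a k) (evf F k).
  apply/ffunP=> m; rewrite sum_ffunE (bigD1 m) //= big1 ?addr0.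
    by rewrite fscaleE ffunE eqxx mulr1.
  by move=> k hk; rewrite fscaleE ffunE eq_sym (negbTE hk) mulr0.
rewrite {1}ea !(big_mkcond predT) /=.
elim: (index_enum _) => [|k r IH]; first by rewrite !big_nil D0.
by rewrite !big_cons -[X in D (_ + X)]fscale1 Dlin fscale1 IH.
Qed.

Lemma D_evf_mvmul i X Y :
  D (evf F i) (M X Y) = M (D (evf F i) X) Y + M X (D (evf F i) Y).
Proof.
case: D_def => _ D1 DE _ D_fE_blade.
apply: (dl_mvmul s_sqr (D_add _) (D_scale _) (pd_sign _) (D1 i) (DE i)) => [j k|j K].
  exact: connection_skew.
exact: D_fE_blade.
Qed.

Lemma D_mvmul a X Y : D a (M X Y) = M (D a X) Y + M X (D a Y).
Proof.
rewrite !D_direction_decomp mvmul_suml mvmul_sumr -big_split /=.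
by apply: eq_bigr => k _; rewrite D_evf_mvmul mvmulZl mvmulZr fscaleDr.
Qed.

End Frame.

Theorem mainTheorem18 (F : comNzRingType) (n : nat) (s : 'I_n -> F)
    (d : 'I_n -> F -> F) (tD : {ffun 'I_n -> F} -> {ffun 'I_n -> F} -> {ffun 'I_n -> F})
    (D : {ffun 'I_n -> F} -> {ffun {set 'I_n} -> F} -> {ffun {set 'I_n} -> F}) :
  (forall i, s i = 1 \/ s i = -1) ->
  is_frame_derivation d ->
  metric_connection s d tD ->
  defines_D s d tD D ->
  (forall (i : 'I_n) (js : seq 'I_n),
     D (evf F i) (strprod s js) =
     \sum_(r < size js)
        mvmul s (mvmul s (strprod s (take r js)) (D (evf F i) (fE F (nth i js r))))
                (strprod s (drop r.+1 js))) /\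
  (forall (a : {ffun 'I_n -> F}) (A B : {ffun {set 'I_n} -> F}),
     D a (mvmul s A B) = mvmul s (D a A) B + mvmul s A (D a B)).
Proof.
move=> s_sign d_der tD_metric D_def; split=> [i js|a A B].
  apply: (derivation_strprod (s_sqr s_sign)).
  exact: D_evf_mvmul s_sign d_der tD_metric D_def i.
exact: D_mvmul s_sign d_der tD_metric D_def a A B.
Qed.
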